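(* Let $k\ge1$, $n\ge 2k$ and $0\le i\le n-2$ be integers. For $j\in\mathbb Z$ put \[ A_{i,j}=\binom{i}{\lceil i/2\rceil-j(n-k+2)}-\binom{i}{\lfloor (i+n-k)/2\rfloor+1-j(n-k+2)}, \] \[ B_{i,j}=\binom{i}{\lceil i/2\rceil-j(n-k+1)}-\binom{i}{\lfloor (i+n-k-1)/2\rfloor+1-j(n-k+1)}, \] \[ C_{i,j}=\binom{i}{\lceil i/2\rceil-j(n-k)}-\binom{i}{\lfloor (i+n-k-2)/2\rfloor+1-j(n-k)}. \] Then \[ \sum_{j\in\mathbb Z}\bigl(-A_{i,j}+2B_{i,j}-C_{i,j}\bigr) =\binom{i+1}{\lfloor\frac{i+n-k}{2}\rfloor+1}+\binom{i+1}{\lfloor\frac{i+n-k}{2}\rfloor-n+k} -2\left(\binom{i}{\lfloor\frac{i+n-k-1}{2}\rfloor+1}+\binom{i}{\lfloor\frac{i+n-k-1}{2}\rfloor-n+k}\right). \]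
   Context: Convention: $\binom{a}{b}=0$ if $b<0$ or $b>a$. *)

From Stdlib Require Import ZArith Arith List.
Open Scope Z_scope.

Fixpoint binN (a b : nat) : nat :=
  match a, b with
  | _, O => 1%nat
  | O, S _ => 0%nat
  | S a', S b' => (binN a' b' + binN a' b)%nat
  end.

(* Integer binomial with the convention C(a,b) = 0 if b < 0 or b > a
   (for a >= 0; for a < 0 we also return 0, never used here). *)
Definition binZ (a b : Z) : Z :=
  if orb (b <? 0) (a <? b) then 0 else Z.of_nat (binN (Z.to_nat a) (Z.to_nat b)).

(* sum_{j = -N}^{N} f j *)
Definition symsum (N : nat) (f : Z -> Z) : Z :=
  fold_right Z.add 0 (map (fun t : nat => f (Z.of_nat t - Z.of_nat N)) (seq 0 (2 * N + 1))).

Definition ceil2 (x : Z) : Z := (x + 1) / 2.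
Definition floor2 (x : Z) : Z := x / 2.

Definition Aij (n k i j : Z) : Z :=
  binZ i (ceil2 i - j * (n - k + 2)) - binZ i (floor2 (i + n - k) + 1 - j * (n - k + 2)).
Definition Bij (n k i j : Z) : Z :=
  binZ i (ceil2 i - j * (n - k + 1)) - binZ i (floor2 (i + n - k - 1) + 1 - j * (n - k + 1)).
Definition Cij (n k i j : Z) : Z :=
  binZ i (ceil2 i - j * (n - k)) - binZ i (floor2 (i + n - k - 2) + 1 - j * (n - k)).

From Stdlib Require Import ZArith Arith Lia List.
Open Scope Z_scope.

(* Write h = ceil(i/2), a = floor((i+n-k)/2), b = floor((i+n-k-1)/2),
   so that floor((i+n-k-2)/2) = a - 1.  Every summand is a combination of
   binomials C(i, x - j m) with a shift x and a period m in {n-k, n-k+1, n-k+2};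
   since i < x + m and x < 2m, these vanish for j <= -1 and j >= 2.  Hence the
   symmetric sum reduces to the terms j = 0 and j = 1.  At j = 0 the three
   C(i, h) cancel (coefficients -1 + 2 - 1); at j = 1 the C(i, h - m) vanish
   because h < m.  What remains is
     C(i,a+1) + C(i,a) + C(i,a-n+k) + C(i,a-n+k-1) - 2 C(i,b+1) - 2 C(i,b-n+k),
   which is the right-hand side after Pascal's rule on the two C(i+1, _). *)

Lemma binN_gt (a b : nat) : (a < b)%nat -> binN a b = 0%nat.
Proof.
  revert b; induction a as [|a IHa]; intros [|b] Hab; simpl; try lia.
  rewrite !IHa; lia.
Qed.

Lemma binZ_out (a b : Z) : b < 0 \/ a < b -> binZ a b = 0.
Proof.
  intros H; unfold binZ.
  replace ((b <? 0) || (a <? b))%bool with true; [reflexivity|].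
  destruct H as [H|H]; apply Z.ltb_lt in H; rewrite H; auto using Bool.orb_true_r.
Qed.

Lemma binZ_pascal (a b : Z) : 0 <= a -> binZ (a + 1) b = binZ a b + binZ a (b - 1).
Proof.
  intros Ha.
  destruct (Z_lt_le_dec b 0) as [Hb|Hb]; [rewrite !binZ_out by lia; reflexivity|].
  destruct (Z_lt_le_dec (a + 1) b) as [Hab|Hab]; [rewrite !binZ_out by lia; reflexivity|].
  destruct (Z.eq_dec b 0) as [->|Hb0].
  - rewrite (binZ_out a (0 - 1)) by lia.
    unfold binZ; simpl.
    rewrite (proj2 (Z.ltb_ge (a + 1) 0)), (proj2 (Z.ltb_ge a 0)) by lia.
    simpl; destruct (Z.to_nat (a + 1)), (Z.to_nat a); reflexivity.
  - unfold binZ.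
    rewrite (proj2 (Z.ltb_ge b 0)), (proj2 (Z.ltb_ge (b - 1) 0)),
      (proj2 (Z.ltb_ge (a + 1) b)), (proj2 (Z.ltb_ge a (b - 1))) by lia.
    replace (Z.to_nat (a + 1)) with (S (Z.to_nat a)) by lia.
    replace (Z.to_nat b) with (S (Z.to_nat (b - 1))) by lia.
    simpl.
    destruct (Z.ltb_spec a b) as [Hlt|Hge].
    + rewrite (binN_gt (Z.to_nat a) (S (Z.to_nat (b - 1)))) by lia; lia.
    + lia.
Qed.

(* A shifted binomial C(i, x - j m) vanishes for j outside {0, 1} as soon as
   i < x + m (so j <= -1 overshoots i) and x < 2 m (so j >= 2 is negative). *)
Lemma binZ_shift_out (i x m j : Z) :
  i < x + m -> x < 2 * m -> j <= -1 \/ 2 <= j -> binZ i (x - j * m) = 0.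
Proof. intros Hi Hx Hj; apply binZ_out; nia. Qed.

Lemma sum_fold_app (l l' : list Z) :
  fold_right Z.add 0 (l ++ l') = fold_right Z.add 0 l + fold_right Z.add 0 l'.
Proof. induction l as [|x l IH]; simpl; lia. Qed.

Lemma sum_fold_map_zero (g : nat -> Z) (l : list nat) :
  (forall t, In t l -> g t = 0) -> fold_right Z.add 0 (map g l) = 0.
Proof. induction l as [|t l IH]; simpl; intros H; auto; rewrite H, IH; auto. Qed.

Lemma symsum_support01 (N : nat) (f : Z -> Z) : (1 <= N)%nat ->
  (forall j, j <= -1 \/ 2 <= j -> f j = 0) -> symsum N f = f 0 + f 1.
Proof.
  intros HN Hf; unfold symsum.
  replace (2 * N + 1)%nat with (N + (2 + (N - 1)))%nat by lia.
  rewrite !seq_app, !map_app, !sum_fold_app.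
  rewrite (sum_fold_map_zero _ (seq 0 N)),
    (sum_fold_map_zero _ (seq (0 + N + 2) (N - 1))).
  2, 3: intros t Ht; apply in_seq in Ht; apply Hf; lia.
  cbn [seq map fold_right].
  replace (Z.of_nat (0 + N) - Z.of_nat N) with 0 by lia.
  replace (Z.of_nat (S (0 + N)) - Z.of_nat N) with 1 by lia.
  lia.
Qed.

Lemma floor2_bounds (x : Z) : 2 * floor2 x <= x <= 2 * floor2 x + 1.
Proof.
  unfold floor2; pose proof (Z.div_mod x 2); pose proof (Z.mod_pos_bound x 2); lia.
Qed.

Lemma floor2_sub2 (x : Z) : floor2 (x - 2) = floor2 x - 1.
Proof. pose proof (floor2_bounds x); pose proof (floor2_bounds (x - 2)); lia. Qed.

Lemma ceil2_bounds (x : Z) : x <= 2 * ceil2 x <= x + 1.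
Proof. unfold ceil2; pose proof (floor2_bounds (x + 1)); unfold floor2 in *; lia. Qed.

Theorem mainTheorem10 (k n i : Z) (N : nat) :
  1 <= k -> 2 * k <= n -> 0 <= i <= n - 2 -> i + 1 <= Z.of_nat N ->
  symsum N (fun j => - Aij n k i j + 2 * Bij n k i j - Cij n k i j)
  = binZ (i + 1) (floor2 (i + n - k) + 1) + binZ (i + 1) (floor2 (i + n - k) - n + k)
    - 2 * (binZ i (floor2 (i + n - k - 1) + 1) + binZ i (floor2 (i + n - k - 1) - n + k)).
Proof.
  intros Hk Hn Hi HN.
  unfold Aij, Bij, Cij.
  replace (i + n - k - 2) with ((i + n - k) - 2) by lia; rewrite floor2_sub2.
  pose proof (ceil2_bounds i) as Hh; pose proof (floor2_bounds (i + n - k)) as Ha.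
  pose proof (floor2_bounds (i + n - k - 1)) as Hb.
  set (h := ceil2 i) in *; set (a := floor2 (i + n - k)) in *;
    set (b := floor2 (i + n - k - 1)) in *; clearbody h a b.
  (* only j = 0 and j = 1 contribute *)
  rewrite symsum_support01 by
    (lia || (intros j Hj; rewrite !(binZ_shift_out i) by (assumption || lia); lia)).
  (* at j = 1 the leading binomials C(i, h - m) vanish since h < m *)
  rewrite !(binZ_out i (h - 1 * _)) by lia.
  rewrite !binZ_pascal by lia.
  replace (a + 1 - 1) with a by lia.
  replace (a - n + k - 1) with (a + 1 - 1 * (n - k + 2)) by lia.
  replace (b - n + k) with (b + 1 - 1 * (n - k + 1)) by lia.
  replace (a - 1 + 1 - 1 * (n - k)) with (a - n + k) by lia.
  rewrite !Z.mul_0_l, !Z.sub_0_r, Z.sub_add.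
  lia.
Qed.
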